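(* Let $G$ be a group containing a normal torsion-free abelian subgroup $A$ of finite index. If $G$ has no proper contranormal subgroups, then $G$ is nilpotent.
   Context: A subgroup $H$ of $G$ is contranormal in $G$ if its normal closure $H^G$ equals $G$; it is proper if $H\ne G$. *)

(* abstract (possibly infinite) groups, since MathComp's
   fingroup only handles finite groups. *)
From Stdlib Require Import List.

Record Group := {
  carrier :> Type;
  gmul : carrier -> carrier -> carrier;
  ginv : carrier -> carrier;
  gone : carrier;
  gmul_assoc : forall x y z, gmul x (gmul y z) = gmul (gmul x y) z;
  gmul_1l : forall x, gmul gone x = x;
  gmul_1r : forall x, gmul x gone = x;
  gmul_Vl : forall x, gmul (ginv x) x = gone;
  gmul_Vr : forall x, gmul x (ginv x) = gone
}.

Section GroupDefs.
Variable G : Group.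
Local Notation "x * y" := (gmul G x y).

Fixpoint gpow (x : G) (n : nat) : G :=
  match n with O => gone G | S k => x * gpow x k end.

Definition is_subgroup (H : G -> Prop) : Prop :=
  H (gone G) /\ (forall x y, H x -> H y -> H (x * y)) /\
  (forall x, H x -> H (ginv G x)).

Definition is_normal (H : G -> Prop) : Prop :=
  is_subgroup H /\ forall g h, H h -> H (ginv G g * h * g).

Definition abelian (H : G -> Prop) : Prop :=
  forall x y, H x -> H y -> x * y = y * x.

Definition torsion_free (H : G -> Prop) : Prop :=
  forall x n, H x -> 0 < n -> gpow x n = gone G -> x = gone G.

Definition finite_index (H : G -> Prop) : Prop :=
  exists l : list G, forall g, exists t, In t l /\ H (ginv G t * g).

Definition gen (S : G -> Prop) : G -> Prop :=
  fun x => forall K, is_subgroup K -> (forall s, S s -> K s) -> K x.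

Definition normal_closure (H : G -> Prop) : G -> Prop :=
  fun x => forall N, is_normal N -> (forall h, H h -> N h) -> N x.

Definition contranormal (H : G -> Prop) : Prop :=
  forall x, normal_closure H x.

Definition proper (H : G -> Prop) : Prop := exists x, ~ H x.

Definition comm (x y : G) : G := ginv G x * ginv G y * x * y.

Fixpoint lcs (n : nat) : G -> Prop :=
  match n with
  | O => fun _ => True
  | S k => gen (fun z => exists x y, lcs k x /\ z = comm x y)
  end.

Definition nilpotent : Prop :=
  exists n, forall x, lcs n x -> x = gone G.

End GroupDefs.

(* G acts on the m cosets of A, and its image in Sym(m) is a finite group without proper
   contranormal subgroups, since their preimages would be contranormal in G.  In a finite
   group the normaliser of a Sylow subgroup is contranormal by the Frattini argument, so
   all Sylow subgroups are normal and the image is nilpotent.  Hence a term of the lower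
   central series of G lies in A, and it remains to show that A is central.
   Write A additively.  If a^g <> a, then b = a^g - a is a nonzero element killed by the
   norm map x |-> sum_t x^t (t over a transversal); since A is torsion-free, b does not lie
   in the sum of <pb> and the G-fixed points, for a prime p not dividing m.  By Zorn's
   lemma some subgroup U containing them is maximal with b \notin U, and A/U is then a
   p-group.  The crossed homomorphism W : G -> A, W(g) = sum_t g t t'^-1 where g t \in A t',
   is x |-> mx on A, so H = {g | W(g) \in core_G U} is a subgroup with HA = G and b \notin H.
   Its normal closure contains [A, G], the fixed points, hence mA, and the p-power
   multiples p^e x \in core_G U; as m and p are coprime it contains A, hence G: H is a
   proper contranormal subgroup. *)

From Pilot Require Import Defs.
From HB Require Import structures.
From mathcomp Require Import all_boot all_fingroup all_solvable all_algebra.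
From mathcomp Require Import boolp.
From mathcomp Require classical_sets.
Set Implicit Arguments. Unset Strict Implicit. Unset Printing Implicit Defensive.
Import GRing.Theory.
Local Open Scope group_scope.

Section GroupStructure.
Variable G : Defs.Group.

Definition gtype : Type := carrier G.
HB.instance Definition _ := gen_eqMixin gtype.
HB.instance Definition _ := gen_choiceMixin gtype.
HB.instance Definition _ :=
  isGroup.Build gtype (@gmul_assoc G) (@gmul_1l G) (@gmul_1r G) (@gmul_Vl G) (@gmul_Vr G).

Lemma gpowE (x : gtype) n : gpow G x n = x ^+ n.
Proof. by elim: n => [|n IHn] //=; rewrite expgS -IHn. Qed.

Lemma commE (x y : gtype) : comm G x y = [~ x, y].
Proof. by rewrite /comm /commg /conjg !mulgA. Qed.

Variable H : gtype -> Prop.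

Lemma is_subgroupI : H 1 -> (forall x y, H x -> H y -> H (x * y)) ->
  (forall x, H x -> H x^-1) -> is_subgroup G H.
Proof. by move=> H1 HM HV; split; [|split]. Qed.

Section Closure.
Hypothesis sH : is_subgroup G H.
Lemma subgroup1 : H 1. Proof. by case: sH. Qed.
Lemma subgroupM x y : H x -> H y -> H (x * y). Proof. by case: sH => _ [HM _]; apply: HM. Qed.
Lemma subgroupV x : H x -> H x^-1. Proof. by case: sH => _ [_ HV]; apply: HV. Qed.
End Closure.

Lemma normalJ x g : is_normal G H -> H x -> H (x ^ g).
Proof. by case=> _ HJ /(HJ g); rewrite /conjg mulgA. Qed.

Lemma normalJE x g : is_normal G H -> H (x ^ g) = H x.
Proof.
move=> nH; apply: propext; split; last exact: normalJ.
by move/(normalJ g^-1 nH); rewrite conjgK.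
Qed.

Definition no_proper_contranormal : Prop :=
  forall K, is_subgroup G K -> Defs.proper G K -> ~ contranormal G K.

Lemma contranormal_total : no_proper_contranormal -> is_subgroup G H ->
  contranormal G H -> forall x, H x.
Proof. by move=> noCN sH cnH x; apply: contrapT => Hx; apply: (noCN H sH); first exists x. Qed.

End GroupStructure.

Lemma is_subgroupT (G : Defs.Group) : is_subgroup G (fun=> True).
Proof. by apply: is_subgroupI. Qed.

Section FiniteNilpotent.
Variable gT : finGroupType.
Implicit Types K H : {group gT}.

Definition contranormal_in K (H : {set gT}) :=
  forall N : {group gT}, N <| K -> H \subset N -> N :=: K.

Lemma nilpotent_of_Sylow_normal K :
  (forall p (P : {group gT}), p.-Sylow(K) P -> P <| K) -> nilpotent K.
Proof.
move=> nPK; apply: (nilpotentS _ (Fitting_nil K)).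
rewrite -{1}(Sylow_gen K) gen_subG; apply/bigcupsP => P /SylowP[p _ sylP].
apply: subset_trans (pcore_max (pHall_pgroup sylP) (nPK p P sylP)) _.
by rewrite -p_core_Fitting pcore_sub.
Qed.

(* Frattini argument: N 'N_K(P) = K for every normal N containing P. *)
Lemma Sylow_normaliser_contranormal K p (P : {group gT}) :
  p.-Sylow(K) P -> contranormal_in K 'N_K(P).
Proof.
move=> sylP N nNK sNN; have sNK := normal_sub nNK.
have sPN : P \subset N by apply: subset_trans sNN; rewrite subsetI (pHall_sub sylP) normG.
apply/eqP; rewrite eqEsubset sNK /=.
by rewrite -{1}(Frattini_arg nNK (pHall_subl sPN sNK sylP)) mul_subG.
Qed.

Lemma no_contranormal_nilpotent K :
  (forall H, H \subset K -> contranormal_in K H -> H :=: K) -> nilpotent K.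
Proof.
move=> noCN; apply: nilpotent_of_Sylow_normal => p P sylP.
have NK := noCN _ (subsetIl K 'N(P)) (Sylow_normaliser_contranormal sylP).
by rewrite /normal (pHall_sub sylP) -NK subsetIr.
Qed.

End FiniteNilpotent.

Section FiniteImage.
Variables (G : Defs.Group) (gT : finGroupType) (f : UMagmaMorphism.type (gtype G) gT).
Hypothesis noCN : no_proper_contranormal G.

Definition fimg (S : gtype G -> Prop) : {set gT} := [set s | `[< exists2 g, S g & f g = s >]].
Definition img := fimg (fun=> True).

Lemma mem_fimg (S : gtype G -> Prop) g : S g -> f g \in fimg S.
Proof. by move=> Sg; rewrite inE; apply/asboolP; exists g. Qed.

Lemma fimgP (S : gtype G -> Prop) s : reflect (exists2 g, S g & f g = s) (s \in fimg S).
Proof. by rewrite inE; apply: (iffP (asboolP _)). Qed.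

Lemma fimg_group_set S : is_subgroup G S -> group_set (fimg S).
Proof.
move=> sS; apply/group_setP; split; first by rewrite -(@gmulf1 _ _ f) mem_fimg //; apply: subgroup1.
move=> _ _ /fimgP[g Sg <-] /fimgP[h Sh <-].
by rewrite -gmulfM mem_fimg //; apply: subgroupM.
Qed.

Canonical img_group := Group (fimg_group_set (is_subgroupT G)).

Lemma fimg_normal N (nN : is_normal G N) : Group (fimg_group_set (proj1 nN)) <| img.
Proof.
apply/andP; split.
  by apply/subsetP => _ /fimgP[g _ <-]; apply: mem_fimg.
apply/subsetP => _ /fimgP[g _ <-]; rewrite inE; apply/subsetP => _ /imsetP[_ /fimgP[n Nn <-] ->].
by rewrite -gmulfJ mem_fimg //; apply: normalJ.
Qed.

Lemma img_no_contranormal (H : {group gT}) : H \subset img -> contranormal_in img H -> H :=: img.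
Proof.
move=> sHI cnH; pose fH g := f g \in H.
have sfH : is_subgroup G fH.
  apply: is_subgroupI => [|x y|x]; rewrite /fH ?gmulf1 ?gmulfM ?gmulfV ?group1 ?groupV //.
  exact: groupM.
suff fH_total x : fH x.
  by apply/eqP; rewrite eqEsubset sHI; apply/subsetP => _ /fimgP[g _ <-]; apply: fH_total.
apply: contranormal_total noCN sfH _ x => {}x N nN sHN.
have sHfN : H \subset fimg N.
  apply/subsetP => s Hs; have /fimgP[g _ gs] := subsetP sHI s Hs.
  by rewrite -gs mem_fimg //; apply: sHN; rewrite /fH gs.
have /fimgP[n Nn fnx] : f x \in fimg N by rewrite (cnH _ (fimg_normal nN) sHfN) mem_fimg.
have Nnx : N (n^-1 * x) by apply: sHN; rewrite /fH gmulfM gmulfV fnx mulVg group1.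
by rewrite -(mulKVg n x); exact: (subgroupM (proj1 nN) Nn Nnx).
Qed.

Lemma lcs_img j x : lcs G j x -> f x \in 'L_j.+1(img).
Proof.
elim: j x => [|j IHj] x /=; first by rewrite lcn1 mem_fimg.
move=> gen_x; apply: (gen_x (fun g => f g \in 'L_j.+2(img))) => [|_ [u [v [lcs_u ->]]]].
  apply: is_subgroupI => [|y z|y]; rewrite ?gmulf1 ?gmulfM ?gmulfV ?group1 ?groupV //.
  exact: groupM.
by rewrite commE gmulfR lcnSn mem_commg ?IHj ?mem_fimg.
Qed.

Lemma lcs_ker : exists n, forall x, lcs G n x -> f x = 1.
Proof.
have [n Ln] := lcnP _ (no_contranormal_nilpotent img_no_contranormal).
by exists n => x /lcs_img; rewrite Ln => /set1P.
Qed.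

End FiniteImage.

Lemma In_mem (T : eqType) (x : T) s : List.In x s -> x \in s.
Proof. by elim: s => //= y s IHs; rewrite in_cons => -[->|/IHs ->]; rewrite ?eqxx ?orbT. Qed.

Section Cosets.
Variables (G : Defs.Group) (A : gtype G -> Prop).
Local Notation T := (gtype G).
Hypothesis nA : is_normal G A.
Variable l : seq T.
Hypothesis covl : forall g : T, exists t, List.In t l /\ A (t^-1 * g).
Let sA := proj1 nA.

Lemma coset_trans x y z : A (x^-1 * y) -> A (y^-1 * z) -> A (x^-1 * z).
Proof. by move=> Axy Ayz; have := subgroupM sA Axy Ayz; rewrite mulgA mulgK. Qed.

Lemma coset_sym x y : A (x^-1 * y) -> A (y^-1 * x).
Proof. by move/(subgroupV sA); rewrite invMg invgK. Qed.

Definition rep (g : T) : T := nth 1 l (find (fun t => `[< A (t^-1 * g) >]) l).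

Lemma rep_coset g : rep g \in l /\ A ((rep g)^-1 * g).
Proof.
have [t [/In_mem lt Atg]] := covl g.
have has_g : has (fun t => `[< A (t^-1 * g) >]) l by apply/hasP; exists t => //; apply/asboolP.
by rewrite /rep mem_nth -?has_find //; split=> //; apply/asboolP/(nth_find 1 has_g).
Qed.

Lemma rep_eq g h : A (g^-1 * h) -> rep g = rep h.
Proof.
move=> Agh; rewrite /rep; congr nth; apply: eq_find => t.
apply/asboolP/asboolP => [Atg|Ath]; first exact: coset_trans Atg Agh.
exact: coset_trans Ath (coset_sym Agh).
Qed.

Lemma rep_id g : rep (rep g) = rep g.
Proof. exact/rep_eq/(rep_coset g).2. Qed.

Definition reps : seq T := undup (map rep l).
Definition ncosets : nat := size reps.
Local Notation m := ncosets.

Lemma rep_mem g : rep g \in reps.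
Proof. by rewrite mem_undup -rep_id map_f ?(rep_coset g).1. Qed.

Fact coset_subproof g : index (rep g) reps < m.
Proof. by rewrite index_mem rep_mem. Qed.

Definition coset (g : T) : 'I_m := Ordinal (coset_subproof g).
Definition tr (i : 'I_m) : T := nth 1 reps i.

Lemma tr_coset g : tr (coset g) = rep g.
Proof. by rewrite /tr nth_index ?rep_mem. Qed.

Lemma coset_tr i : coset (tr i) = i.
Proof.
have rep_tr : rep (tr i) = tr i.
  have /mapP[g _ ->] : tr i \in map rep l by rewrite -mem_undup mem_nth.
  exact: rep_id.
by apply: val_inj; rewrite /= rep_tr index_uniq ?undup_uniq.
Qed.

Lemma cosetP g : A ((tr (coset g))^-1 * g).
Proof. by rewrite tr_coset; case: (rep_coset g). Qed.

Lemma coset_eqP g h : coset g = coset h <-> A (g^-1 * h).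
Proof.
split=> [eq_gh|Agh]; last by apply: val_inj; rewrite /= (rep_eq Agh).
by have := cosetP h; rewrite -eq_gh; apply/coset_trans/coset_sym/cosetP.
Qed.

Lemma lact_inj g : injective (fun i => coset (g * tr i)).
Proof.
move=> i j /coset_eqP; rewrite invMg -mulgA mulKg.
by move/coset_eqP; rewrite !coset_tr.
Qed.

Definition ract_fun (g : T) (i : 'I_m) : 'I_m := coset (tr i * g).

Lemma ract_inj g : injective (ract_fun g).
Proof.
move=> i j /coset_eqP.
have -> : (tr i * g)^-1 * (tr j * g) = ((tr i)^-1 * tr j) ^ g by rewrite /conjg invMg !mulgA.
by rewrite normalJE // => /coset_eqP; rewrite !coset_tr.
Qed.

Definition ract (g : T) : {perm 'I_m} := perm (@ract_inj g).

Lemma ractE g i : ract g i = coset (tr i * g).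
Proof. by rewrite permE. Qed.

Lemma ract_fixP g i : ract g i = i <-> A g.
Proof.
rewrite ractE -{2}(coset_tr i) coset_eqP invMg mulgKV.
by split=> [/(subgroupV sA)|/(subgroupV sA)]; rewrite ?invgK.
Qed.

Lemma ract1 : ract 1 = 1.
Proof. by apply/permP => i; rewrite perm1; apply/ract_fixP; apply: subgroup1 sA. Qed.

Lemma ractM : {morph ract : g h / g * h}.
Proof.
move=> g h; apply/permP => i; rewrite permM !ractE; apply/coset_eqP.
set j := coset (tr i * g).
have -> : (tr i * (g * h))^-1 * (tr j * h) = ((tr i * g)^-1 * tr j) ^ h.
  by rewrite /conjg !invMg !mulgA.
by rewrite normalJE //; apply/coset_sym/cosetP.
Qed.

HB.instance Definition _ := isUMagmaMorphism.Build T {perm 'I_m} ract (ract1, ractM).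

Lemma ract_eq1 g : ract g = 1 <-> A g.
Proof.
split=> [/permP/(_ (coset 1))|Ag]; first by rewrite perm1 => /ract_fixP.
by apply/permP => i; rewrite perm1; apply/ract_fixP.
Qed.

End Cosets.

Lemma lcs_sub_finite_index (G : Defs.Group) (A : gtype G -> Prop) (l : seq (gtype G)) :
  is_normal G A -> (forall g : gtype G, exists t, List.In t l /\ A (t^-1 * g)) ->
  no_proper_contranormal G -> exists n, forall x, lcs G n x -> A x.
Proof.
move=> nA covl noCN; have [n ract_lcs] := lcs_ker (ract nA covl) noCN.
by exists n => x /ract_lcs /ract_eq1.
Qed.

Section ZmodSubgroups.
Local Open Scope ring_scope.
Variable V : zmodType.

Definition zmod_subgroup (S : V -> Prop) : Prop :=
  S 0 /\ forall x y, S x -> S y -> S (x - y).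

Lemma mulrnzC (x : V) n (z : int) : x *~ z *+ n = x *+ n *~ z.
Proof. by rewrite !pmulrn mulrzAC. Qed.

Section Closure.
Variable S : V -> Prop.
Hypothesis sS : zmod_subgroup S.

Lemma zsub0 : S 0. Proof. by case: sS. Qed.
Lemma zsubB x y : S x -> S y -> S (x - y). Proof. by case: sS => _; apply. Qed.
Lemma zsubN x : S x -> S (- x). Proof. by rewrite -sub0r; apply: zsubB zsub0. Qed.
Lemma zsubD x y : S x -> S y -> S (x + y).
Proof. by move=> Sx /zsubN Sy; rewrite -[y]opprK; apply: zsubB. Qed.
Lemma zsubMn x n : S x -> S (x *+ n).
Proof.
move=> Sx; elim: n => [|n IHn]; first by rewrite mulr0n; apply: zsub0.
by rewrite mulrS; apply: zsubD.
Qed.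
Lemma zsubMz x z : S x -> S (x *~ z).
Proof.
move=> Sx; case: z => n; first by rewrite -pmulrn; apply: zsubMn.
by rewrite NegzE mulrNz -pmulrn; apply/zsubN/zsubMn.
Qed.

Lemma zsub_coprime x k n : coprime k n -> S (x *+ k) -> S (x *+ n) -> S x.
Proof.
move=> co_kn Sxk Sxn; have /coprimezP[[u v] /= uv] : coprimez k n by rewrite coprimezE.
rewrite -[x]mulr1z -uv mulrzDr ![_ * _%:Z]mulrC !mulrzA -!pmulrn.
by apply: zsubD; apply: zsubMz.
Qed.

Lemma zsub_coprime_divisible x k n : coprime k n -> S (x *+ n) -> exists v, S (v *+ k + x).
Proof.
move=> co_kn Sxn; have /coprimezP[[u v] /= uv] : coprimez k n by rewrite coprimezE.
exists (- (x *~ u)); rewrite -{2}[x]mulr1z -uv mulrzDr mulNrn addrA mulrnzC.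
by rewrite ![_ * _%:Z]mulrC !mulrzA -!pmulrn addNr add0r; apply: zsubMz.
Qed.

Lemma zsubMz_abs x z : S (x *~ z) -> S (x *+ `|z|).
Proof.
case: z => n /=; first by rewrite -pmulrn.
by rewrite NegzE mulrNz -pmulrn => /zsubN; rewrite opprK.
Qed.

End Closure.

(* The hypotheses say that V/U is cocyclic with socle <b + U> of order p. *)
Lemma p_power_multiple (U : V -> Prop) b p : prime p -> zmod_subgroup U ->
    ~ U b -> U (b *+ p) -> (forall y, ~ U y -> exists z : int, U (b - y *~ z)) ->
  forall y, exists e, U (y *+ p ^ e).
Proof.
move=> p_pr sU Ub Ubp Ucyc y.
have [Uy|Uy] := pselect (U y); first by exists 0%N; rewrite expn0 mulr1n.
have [z Ubz] := Ucyc y Uy.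
have z_neq0 : z != 0 by apply/eqP => z0; apply: Ub; move: Ubz; rewrite z0 mulr0z subr0.
have /(zsubMz_abs sU) : U (y *+ p *~ z).
  have := zsubB sU Ubp (zsubMn sU p Ubz).
  by rewrite mulrnBl opprB addrC subrK mulrnzC.
rewrite -mulrnA; set n := (p * _)%N => Uyn.
have n_gt0 : (0 < n)%N by rewrite muln_gt0 prime_gt0 // absz_gt0.
have [r co_pr def_n] := pfactor_coprime p_pr n_gt0.
exists (logn p n); apply: contrapT => Uw; apply: Ub.
have [z' Ubz'] := Ucyc _ Uw.
apply: (@zsub_coprime _ sU b r p _ _ Ubp); first by rewrite coprime_sym.
have Uwr : U (y *+ p ^ logn p n *+ r) by rewrite -mulrnA mulnC -def_n.
have := zsubD sU (zsubMn sU r Ubz') (zsubMz sU z' Uwr).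
by rewrite mulrnBl mulrnzC subrK.
Qed.

Section MaximalAvoiding.
Variables (S0 : V -> Prop) (b : V).
Hypotheses (sS0 : zmod_subgroup S0) (S0b : ~ S0 b).

Let avoiding (W : V -> Prop) := zmod_subgroup (fun x => S0 x \/ W x) /\ ~ (S0 b \/ W b).

Lemma avoiding_chain (F : classical_sets.set (V -> Prop)) :
    (forall X, F X -> avoiding X) -> classical_sets.total_on F classical_sets.subset ->
  avoiding (classical_sets.bigcup F id).
Proof.
move=> sFP totF.
have pair x y : S0 x \/ (exists2 X, F X & X x) -> S0 y \/ (exists2 X, F X & X y) ->
    (S0 x /\ S0 y) \/ exists2 X, F X & (S0 x \/ X x) /\ (S0 y \/ X y).
  move=> [S0x|[X FX Xx]] [S0y|[Y FY Yy]]; [by left|right..].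
  - by exists Y => //; split; auto.
  - by exists X => //; split; auto.
  by have [sXY|sYX] := totF X Y FX FY; [exists Y|exists X] => //; split; auto.
split; [split; first by left; apply: zsub0|].
  move=> x y Bx By; have [[S0x S0y]|[X FX [Xx Xy]]] := pair x y Bx By.
    by left; apply: zsubB.
  have [sX _] := sFP X FX; case: (zsubB sX Xx Xy) => [|Xxy]; first by left.
  by right; exists X.
move=> Bb; have [[S0b' _]|[X FX [Xb _]]] := pair b b Bb Bb; first exact: S0b.
by have [_] := sFP X FX; apply.
Qed.

Lemma zmod_subgroup_maximal :
  exists U, [/\ zmod_subgroup U, forall x, S0 x -> U x, ~ U b
              & forall y, ~ U y -> exists z : int, U (b - y *~ z)].
Proof.
have [|W [[sW Wb] maxW]] := @classical_sets.Zorn_bigcup _ avoiding.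
  exact: avoiding_chain.
pose U x := S0 x \/ W x.
exists U; split=> // [x|y Uy]; first by left.
pose Wy x := exists u (z : int), U u /\ x = u + y *~ z.
have UWy x : U x -> Wy x by move=> Ux; exists x, 0; rewrite mulr0z addr0.
have sWy : zmod_subgroup Wy.
  split=> [|_ _ [u1 [z1 [Uu1 ->]]] [u2 [z2 [Uu2 ->]]]]; first exact/UWy/(zsub0 sW).
  exists (u1 - u2), (z1 - z2); rewrite mulrzBr opprD addrACA.
  by split=> //; exact: (zsubB sW Uu1 Uu2).
have Wy_not_avoiding : ~ avoiding Wy.
  apply: maxW; split=> [x Wx|sWyW]; first by apply: UWy; right.
  by apply: Uy; right; apply: sWyW; exists 0, 1; rewrite add0r mulr1z; split=> //; apply: zsub0.
have S0Wy x : S0 x \/ Wy x -> Wy x by case=> // S0x; apply: UWy; left.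
have [u [z [Uu ->]]] : Wy b.
  apply: contrapT => Wyb; apply: Wy_not_avoiding; split; last by move/S0Wy.
  split=> [|x x' /S0Wy Wx /S0Wy Wx']; first by left; apply: zsub0.
  by right; exact: (zsubB sWy Wx Wx').
by exists z; rewrite addrK.
Qed.

End MaximalAvoiding.

Lemma zmod_subgroup_p_primary S0 b p : prime p -> zmod_subgroup S0 ->
    S0 (b *+ p) -> ~ S0 b ->
  exists U, [/\ zmod_subgroup U, forall x, S0 x -> U x, ~ U b
              & forall y, exists e, U (y *+ p ^ e)].
Proof.
move=> p_pr sS0 S0bp S0b; have [U [sU S0U Ub Ucyc]] := zmod_subgroup_maximal sS0 S0b.
by exists U; split=> //; apply: p_power_multiple Ucyc => //; apply: S0U.
Qed.

End ZmodSubgroups.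

Section AbelianNormal.
Variables (G : Defs.Group) (A : gtype G -> Prop).
Local Notation T := (gtype G).
Hypotheses (nA : is_normal G A) (abA : forall x y, A x -> A y -> x * y = y * x).
Variable l : seq T.
Hypothesis covl : forall g : T, exists t, List.In t l /\ A (t^-1 * g).
Local Notation m := (ncosets A l).
Local Notation coset := (coset nA covl).
Local Notation tr := (@tr _ A l).
Let sA := proj1 nA.

Definition Atype := {x : T | `[< A x >]}.
HB.instance Definition _ := [Choice of Atype by <:].

Lemma valA (x : Atype) : A (val x). Proof. exact/asboolP/(valP x). Qed.
Definition inA (x : T) (Ax : A x) : Atype := exist _ x (asboolT Ax).

Definition azero : Atype := inA (subgroup1 sA).
Definition aadd (x y : Atype) : Atype := inA (subgroupM sA (valA x) (valA y)).
Definition aopp (x : Atype) : Atype := inA (subgroupV sA (valA x)).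

Lemma aaddA : associative aadd. Proof. by move=> x y z; apply: val_inj; rewrite /= mulgA. Qed.
Lemma aaddC : commutative aadd. Proof. by move=> x y; apply: val_inj; apply: abA; apply: valA. Qed.
Lemma aadd0 : left_id azero aadd. Proof. by move=> x; apply: val_inj; rewrite /= mul1g. Qed.
Lemma aaddN : left_inverse azero aopp aadd.
Proof. by move=> x; apply: val_inj; rewrite /= mulVg. Qed.

HB.instance Definition _ := GRing.isZmodule.Build Atype aaddA aaddC aadd0 aaddN.

Local Open Scope ring_scope.
Local Open Scope group_scope.

Lemma valD (x y : Atype) : val (x + y) = val x * val y. Proof. by []. Qed.
Lemma valMn (x : Atype) n : val (x *+ n) = val x ^+ n.
Proof. by elim: n => [|n IHn] //; rewrite mulrS valD IHn expgS. Qed.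

Definition cj (g : T) (x : Atype) : Atype := inA (normalJ g nA (valA x)).

Lemma cj_is_additive g : zmod_morphism (cj g).
Proof. by move=> x y; apply: val_inj; rewrite /= conjMg conjVg. Qed.
HB.instance Definition _ (g : T) :=
  GRing.isZmodMorphism.Build Atype Atype (cj g) (cj_is_additive g).

Lemma cjM g h x : cj (g * h) x = cj h (cj g x).
Proof. by apply: val_inj; rewrite /= conjgM. Qed.
Lemma cjK g : cancel (cj g) (cj g^-1).
Proof. by move=> x; apply: val_inj; rewrite /= conjgK. Qed.
Lemma cjKV g : cancel (cj g^-1) (cj g).
Proof. by move=> x; apply: val_inj; rewrite /= conjgKV. Qed.

Lemma cj1 x : cj 1 x = x.
Proof. by apply: val_inj; rewrite /= conjg1. Qed.

Lemma cj_A e x : A e -> cj e x = x.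
Proof. by move=> Ae; apply: val_inj; rewrite /= /conjg (abA (valA x) Ae) mulKg. Qed.

Lemma cj_coset g x : cj g x = cj (tr (coset g)) x.
Proof. by rewrite -{1}(mulKVg (tr (coset g)) g) cjM cj_A //; apply: cosetP. Qed.

Definition fixed (x : Atype) := forall g, cj g x = x.

Definition orbit_sum (x : Atype) : Atype := \sum_i cj (tr i) x.

Lemma orbit_sum_is_additive : zmod_morphism orbit_sum.
Proof. by move=> x y; rewrite /orbit_sum -sumrB; apply: eq_bigr => i _; rewrite raddfB. Qed.
HB.instance Definition _ := GRing.isZmodMorphism.Build Atype Atype orbit_sum orbit_sum_is_additive.

Lemma orbit_sum_cj g x : orbit_sum (cj g x) = orbit_sum x.
Proof.
rewrite /orbit_sum [RHS](reindex_inj (@lact_inj _ _ nA _ covl g)); apply: eq_bigr => i _.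
by rewrite -cjM cj_coset.
Qed.

Lemma orbit_sum_fixed x : fixed (orbit_sum x).
Proof.
move=> g; rewrite /orbit_sum raddf_sum [RHS](reindex_inj (@perm_inj _ (ract nA covl g))).
by apply: eq_bigr => i _; rewrite /= -cjM cj_coset ractE.
Qed.

Lemma orbit_sum_of_fixed c : fixed c -> orbit_sum c = c *+ m.
Proof. by move=> fix_c; rewrite /orbit_sum (eq_bigr (fun=> c)) ?sumr_const ?card_ord. Qed.

Lemma mulrn_orbit_sum x : x *+ m = orbit_sum x + \sum_i (x - cj (tr i) x).
Proof. by rewrite sumrB sumr_const card_ord addrC subrK. Qed.

Lemma cocycle_termA g i : A (g * tr i * (tr (coset (g * tr i)))^-1).
Proof.
have := normalJ (tr (coset (g * tr i)))^-1 nA (cosetP nA covl (g * tr i)).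
by rewrite /conjg invgK !mulgA mulgV mul1g.
Qed.

Definition cocycle_term g i : Atype := inA (cocycle_termA g i).

Definition cocycle (g : T) : Atype := \sum_i cocycle_term g i.

Lemma cocycle_A (a : Atype) : cocycle (val a) = a *+ m.
Proof.
rewrite /cocycle (eq_bigr (fun=> a)) ?sumr_const ?card_ord // => i _.
apply: val_inj => /=; have -> : coset (val a * tr i) = i.
  rewrite -{2}(coset_tr nA covl i); apply/coset_eqP.
  rewrite invMg -mulgA -conjgE normalJE //; exact/(subgroupV sA)/valA.
by rewrite mulgK.
Qed.

Lemma cocycle1 : cocycle 1 = 0.
Proof. by have := cocycle_A 0; rewrite mul0rn. Qed.

Lemma cocycle_termM g h i :
  cocycle_term (g * h) i = cj g^-1 (cocycle_term h i) + cocycle_term g (coset (h * tr i)).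
Proof.
apply: val_inj; rewrite valD /=; set j := coset (h * tr i).
have -> : coset (g * h * tr i) = coset (g * tr j).
  apply/coset_eqP; rewrite -(mulgA g) invMg -mulgA mulKg.
  exact: (coset_sym nA (cosetP nA covl (h * tr i))).
by rewrite /conjg invgK !mulgA !mulgKV.
Qed.

Lemma cocycleM g h : cocycle (g * h) = cocycle g + cj g^-1 (cocycle h).
Proof.
rewrite /cocycle (eq_bigr _ (fun i _ => cocycle_termM g h i)) big_split /= -raddf_sum addrC.
by congr (_ + _); rewrite [RHS](reindex_inj (@lact_inj _ _ nA _ covl h)).
Qed.

Lemma cocycleV g : cocycle g^-1 = - cj g (cocycle g).
Proof.
have := cocycleM g g^-1; rewrite mulgV cocycle1 => /eqP; rewrite eq_sym addr_eq0 => /eqP.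
by move/(congr1 (cj g)); rewrite raddfN /= cjKV => ->; rewrite opprK.
Qed.

Lemma ncosets_gt0 : (0 < m)%N.
Proof. exact: leq_ltn_trans (leq0n _) (ltn_ord (coset 1)). Qed.

Section PPrimaryQuotient.
Hypothesis noCN : no_proper_contranormal G.
Variables (p : nat) (U : Atype -> Prop).
Hypotheses (co_pm : coprime p m) (sU : zmod_subgroup U).
Hypotheses (fixedU : forall c, fixed c -> U c) (Up : forall y, exists e, U (y *+ p ^ e)).

Lemma coprime_m_pX e : coprime m (p ^ e).
Proof. by rewrite coprime_sym coprimeXl. Qed.

Definition coreU (x : Atype) := forall g, U (cj g x).

Lemma coreU_subgroup : zmod_subgroup coreU.
Proof.
split=> [g|x y Ux Uy g]; first by rewrite raddf0; apply: zsub0 sU.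
by rewrite raddfB; apply: zsubB sU _ _ (Ux g) (Uy g).
Qed.

Lemma coreU_cj g x : coreU x -> coreU (cj g x).
Proof. by move=> Ux h; rewrite -cjM. Qed.

Lemma coreU_fixed c : fixed c -> coreU c.
Proof. by move=> fix_c g; rewrite fix_c; apply: fixedU. Qed.

Lemma coreU_p_power y : exists e, coreU (y *+ p ^ e).
Proof.
have [e Ue] := fin_all_exists (fun i : 'I_m => Up (cj (tr i) y)).
exists (\sum_i e i)%N => g; rewrite raddfMn /= cj_coset (bigD1 (coset g)) //= expnD mulrnA.
exact: (zsubMn sU _ (Ue (coset g))).
Qed.

Lemma coreU_mulrn_m v : coreU (v *+ m) -> coreU v.
Proof.
have [e Ue] := coreU_p_power v.
by move=> Um; exact: (zsub_coprime coreU_subgroup (coprime_m_pX e) Um Ue).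
Qed.

Definition supplement (g : T) := coreU (cocycle g).

Lemma supplement_subgroup : is_subgroup G supplement.
Proof.
apply: is_subgroupI => [|x y Sx Sy|x Sx]; rewrite /supplement.
- by rewrite cocycle1; exact: (zsub0 coreU_subgroup).
- by rewrite cocycleM; exact: (zsubD coreU_subgroup Sx (coreU_cj _ Sy)).
- by rewrite cocycleV; exact: (zsubN coreU_subgroup (coreU_cj _ Sx)).
Qed.

Lemma supplementA a : supplement (val a) <-> coreU a.
Proof.
rewrite /supplement cocycle_A; split; first exact: coreU_mulrn_m.
exact: (zsubMn coreU_subgroup m).
Qed.

Lemma supplementMA g : exists a : Atype, supplement (g * val a).
Proof.
have [e Ue] := coreU_p_power (cj g (cocycle g)).
have [a Ua] := zsub_coprime_divisible coreU_subgroup (coprime_m_pX e) Ue.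
exists a; rewrite /supplement cocycleM cocycle_A.
by have := coreU_cj g^-1 Ua; rewrite raddfD /= cjK addrC.
Qed.

Lemma supplement_contranormal : contranormal G supplement.
Proof.
move=> x N nN SN; have sN := proj1 nN; pose NA (v : Atype) := N (val v).
have sNA : zmod_subgroup NA.
  split=> [|u v Nu Nv]; first exact: subgroup1 sN.
  exact: (subgroupM sN Nu (subgroupV sN Nv)).
have NA_core v : coreU v -> NA v by move/supplementA/SN.
have NA_comm g v : NA (cj g v - v).
  have [a /SN Nga] := supplementMA g; set h := g * val a in Nga.
  have -> : cj g v = cj h v by rewrite cjM (cj_A _ (valA a)).
  rewrite /NA /=; have -> : val v ^ h * (val v)^-1 = h^-1 * h ^ (val v)^-1.
    by rewrite /conjg invgK !mulgA.
  exact: (subgroupM sN (subgroupV sN Nga) (normalJ _ nN Nga)).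
have NA_m v : NA (v *+ m).
  rewrite mulrn_orbit_sum; apply: (zsubD sNA (NA_core _ (coreU_fixed (orbit_sum_fixed v)))).
  apply: (big_ind NA) => [|u w|i _]; [exact: (zsub0 sNA) | exact: (zsubD sNA) |].
  by rewrite -opprB; exact: (zsubN sNA (NA_comm _ _)).
have NA_total v : NA v.
  have [e Ue] := coreU_p_power v.
  exact: (zsub_coprime sNA (coprime_m_pX e) (NA_m v) (NA_core _ Ue)).
have [a /SN Nxa] := supplementMA x.
by have := subgroupM sN Nxa (subgroupV sN (NA_total a)); rewrite mulgK.
Qed.

Lemma p_primary_subgroup_total y : U y.
Proof.
have Stotal := contranormal_total noCN supplement_subgroup supplement_contranormal.
by have /supplementA/(_ 1) := Stotal (val y); rewrite cj1.
Qed.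

End PPrimaryQuotient.

Section Central.
Hypotheses (noCN : no_proper_contranormal G)
  (tfA : forall x n, A x -> (0 < n)%N -> x ^+ n = 1 -> x = 1).

Lemma Atype_mulrn_eq0 (x : Atype) n : (0 < n)%N -> x *+ n = 0 -> x = 0.
Proof.
by move=> n_gt0 /(congr1 val); rewrite valMn => /(tfA (valA x) n_gt0) x1; apply: val_inj.
Qed.

Lemma Atype_mulrz_eq0 (x : Atype) (z : int) : z != 0 -> x *~ z = 0 -> x = 0.
Proof.
case: z => n z_neq0; first by rewrite -pmulrn; apply: Atype_mulrn_eq0; rewrite lt0n.
by rewrite NegzE mulrNz -pmulrn => /eqP; rewrite oppr_eq0 => /eqP; apply: Atype_mulrn_eq0.
Qed.

(* Applying the norm map, [b = c + p k b] forces [c = 0], then [(1 - p k) b = 0]. *)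
Lemma orbit_sum_kernel_avoid b p c (k : int) : (1 < p)%N -> b != 0 -> orbit_sum b = 0 ->
  fixed c -> b != c + b *+ p *~ k.
Proof.
move=> p_gt1 b_neq0 orbit_b fix_c; apply/eqP => def_b.
have c0 : c = 0.
  have := congr1 orbit_sum def_b; rewrite raddfD /= raddfMz raddfMn /= orbit_b.
  rewrite mul0rn mul0rz addr0 orbit_sum_of_fixed // => /esym.
  exact: Atype_mulrn_eq0 ncosets_gt0.
move: def_b; rewrite c0 add0r => /eqP; rewrite -subr_eq0 -{1}[b]mulr1z pmulrn -mulrzA -mulrzBr.
move=> /eqP /Atype_mulrz_eq0 b0; apply: (negP b_neq0); apply/eqP/b0.
apply/eqP => /eqP; rewrite subr_eq0 => /eqP /(congr1 absz); rewrite abszM /=.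
by move/esym/eqP; rewrite muln_eq1 => /andP[/eqP p1 _]; rewrite p1 in p_gt1.
Qed.

Lemma orbit_sum_kernel_p_primary b p : prime p -> b != 0 -> orbit_sum b = 0 ->
  exists U, [/\ zmod_subgroup U, forall c, fixed c -> U c, ~ U b
              & forall y, exists e, U (y *+ p ^ e)].
Proof.
move=> p_pr b_neq0 orbit_b.
pose S0 y := exists c (k : int), fixed c /\ y = c + b *+ p *~ k.
have fixed0 : fixed 0 by move=> g; rewrite raddf0.
have [|||U [sU S0U Ub Up]] := @zmod_subgroup_p_primary _ S0 b p p_pr.
- split=> [|_ _ [c1 [k1 [fix1 ->]]] [c2 [k2 [fix2 ->]]]].
    by exists 0, 0; rewrite mulr0z addr0.
  exists (c1 - c2), (k1 - k2); split; first by move=> g; rewrite raddfB /= fix1 fix2.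
  by rewrite mulrzBr opprD addrACA.
- by exists 0, 1%R; rewrite add0r mulr1z.
- move=> [c [k [fix_c /eqP]]]; apply/negP.
  exact: orbit_sum_kernel_avoid (prime_gt1 p_pr) b_neq0 orbit_b fix_c.
by exists U; split=> // c fix_c; apply: S0U; exists c, 0; rewrite mulr0z addr0.
Qed.

Lemma normal_abelian_central a g : A a -> a ^ g = a.
Proof.
move=> Aa; apply: contrapT => a_moved; pose x := inA Aa.
have [p m_lt_p p_pr] := prime_above m.
have co_pm : coprime p m by rewrite prime_coprime // gtnNdvd ?ncosets_gt0.
have b_neq0 : cj g x - x != 0 by rewrite subr_eq0; apply/eqP => /(congr1 val).
have orbit_b : orbit_sum (cj g x - x) = 0 by rewrite raddfB /= orbit_sum_cj subrr.
have [U [sU fixedU Ub Up]] := orbit_sum_kernel_p_primary p_pr b_neq0 orbit_b.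
exact/Ub/(p_primary_subgroup_total noCN co_pm sU fixedU Up).
Qed.

End Central.

End AbelianNormal.

Theorem lemma2p11 (G : Defs.Group) (A : G -> Prop) :
  Defs.is_normal G A -> Defs.abelian G A -> Defs.torsion_free G A -> Defs.finite_index G A ->
  (forall H : G -> Prop, Defs.is_subgroup G H -> Defs.proper G H -> ~ Defs.contranormal G H) ->
  Defs.nilpotent G.
Proof.
move=> nA abA tfA [l covl] noCN.
have tfA' (x : gtype G) n : A x -> (0 < n)%N -> x ^+ n = 1 -> x = 1.
  by move=> Ax /ltP n_gt0; rewrite -gpowE; apply: tfA.
have [n lcs_A] := lcs_sub_finite_index nA covl noCN.
exists n.+1 => x /= gen_x; apply: (gen_x (fun z : gtype G => z = 1)).
  by apply: is_subgroupI => [|u v -> ->|u ->]; rewrite ?mulg1 ?invg1.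
move=> _ [u [v [lcs_u ->]]].
by rewrite commE commgEl (normal_abelian_central nA abA covl noCN tfA') ?mulVg //; apply: lcs_A.
Qed.
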